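(* Let $T\ge1$ and $d_1,\dots,d_T\in\{0,1,2,\dots\}$. For $t\in[T]$ let $m_t=\{\tau\in[t-1]:\tau+d_\tau\ge t\}$, let $\sigma_{\max}=\max_{t\in[T]}|m_t|$, and for $S\subseteq[T]$ let $\sigma_{\max}^S=\max_{\tau\in[T]}|m_\tau\cap S|$ and $\bar S=[T]\setminus S$. Then $$\sigma_{\max}=\min_{S\subseteq[T]}\left(|S|+\sigma_{\max}^{\bar S}\right).$$
   Context: $[k]=\{1,\dots,k\}$, $[0]=\emptyset$. *)

From mathcomp Require Import all_boot.
Set Implicit Arguments. Unset Strict Implicit. Unset Printing Implicit Defensive.

(* Indexing convention: the time steps [T] = {1,...,T} are represented by
   the ordinal type 'I_T, the ordinal i standing for the time step i+1.
   The conditions "tau <= t-1" and "tau + d_tau >= t" are invariant under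
   this shift. *)

Definition mset (T : nat) (d : 'I_T -> nat) (t : 'I_T) : {set 'I_T} :=
  [set tau : 'I_T | (tau < t) && (t <= tau + d tau)].

(* sigma_max = max_{t in [T]} |m_t|  (0 for empty max, irrelevant as T >= 1) *)
Definition sigma_max (T : nat) (d : 'I_T -> nat) : nat :=
  \max_(t : 'I_T) #|mset d t|.

Definition sigma_max_on (T : nat) (d : 'I_T -> nat) (S : {set 'I_T}) : nat :=
  \max_(tau : 'I_T) #|mset d tau :&: S|.

Definition cost (T : nat) (d : 'I_T -> nat) (S : {set 'I_T}) : nat :=
  #|S| + sigma_max_on d (~: S).

Definition min_cost (T : nat) (d : 'I_T -> nat) : nat :=
  cost d [arg min_(S < set0) cost d S].

From mathcomp Require Import all_boot.

(* Each m_t splits into its part inside S, of size at most |S|, and its part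
   outside S, of size at most sigma_max^{bar S}; so every S costs at least
   sigma_max, and S = set0 costs exactly sigma_max. *)

Section Cost.

Variables (T : nat) (d : 'I_T -> nat).

Lemma sigma_max_on_setT : sigma_max_on d [set: 'I_T] = sigma_max d.
Proof. by apply: eq_bigr => t _; rewrite setIT. Qed.

Lemma cost_set0 : cost d set0 = sigma_max d.
Proof. by rewrite /cost cards0 setC0 sigma_max_on_setT. Qed.

Lemma card_mset_le_cost (S : {set 'I_T}) (t : 'I_T) : #|mset d t| <= cost d S.
Proof.
rewrite -(cardsID S (mset d t)) /cost leq_add //.
  by rewrite subset_leq_card // subsetIr.
by rewrite setDE (leq_bigmax t).
Qed.

Lemma sigma_max_le_cost (S : {set 'I_T}) : sigma_max d <= cost d S.
Proof. by apply/bigmax_leqP => t _; apply: card_mset_le_cost. Qed.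

End Cost.

Theorem lemmaA8 (T : nat) (hT : 1 <= T) (d : 'I_T -> nat) :
  sigma_max d = min_cost d.
Proof.
rewrite /min_cost; case: arg_minnP => // S _ S_min.
apply/eqP; rewrite eqn_leq sigma_max_le_cost /=.
by rewrite -cost_set0 S_min.
Qed.
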